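(* For a time step $\Delta t>0$, the matrix $$\mathbf{P}=\begin{bmatrix}D_V''&-\frac{\Delta t}{2\hbar}H\\-\frac{\Delta t}{2\hbar}H&D_V''\end{bmatrix}$$ is positive definite if and only if $$\Delta t<\Delta t_{\mathrm{CFL,gen}}=\frac{2}{\rho\!\left(\frac{1}{\hbar}(D_V'')^{-1/2}H(D_V'')^{-1/2}\right)},$$ where $\rho(\cdot)$ is the spectral radius.
   Context: Fix constants $\hbar>0$, $m>0$, cell sizes $\Delta x,\Delta y,\Delta z>0$ and positive integers $n_x,n_y,n_z$. The region is a box of $n_x\times n_y\times n_z$ primary cells of size $\Delta x\times\Delta y\times\Delta z$ with primary nodes $(i,j,k)$, $1\le i\le n_x+1$, $1\le j\le n_y+1$, $1\le k\le n_z+1$. Let $N=(n_x+1)(n_y+1)(n_z+1)$; node-indexed vectors use the ordering $i+(j-1)(n_x+1)+(k-1)(n_x+1)(n_y+1)$. Real potential values $U_{i,j,k}$ are given at the nodes; $D_U$ is the $N\times N$ diagonal matrix containing them. Let $I_p$ be the $p\times p$ identity, $\tilde I_p=\mathrm{diag}(\tfrac12,1,\dots,1,\tfrac12)$ ($p\times p$), $W_p=[0_{p\times1}\ I_p]-[I_p\ 0_{p\times 1}]$ ($p\times(p+1)$), $\otimes$ the Kronecker product. Define $D_V''=\Delta x\Delta y\Delta z\,\tilde I_{n_z+1}\otimes\tilde I_{n_y+1}\otimes\tilde I_{n_x+1}$; $D=[D_x\ D_y\ D_z]$ with $D_x=-I_{n_z+1}\otimes I_{n_y+1}\otimes W_{n_x}^T$,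 $D_y=-I_{n_z+1}\otimes W_{n_y}^T\otimes I_{n_x+1}$, $D_z=-W_{n_z}^T\otimes I_{n_y+1}\otimes I_{n_x+1}$; $D_S''=\mathrm{diag}(\Delta y\Delta z\,\tilde I_{n_z+1}\otimes\tilde I_{n_y+1}\otimes I_{n_x},\ \Delta x\Delta z\,\tilde I_{n_z+1}\otimes I_{n_y}\otimes\tilde I_{n_x+1},\ \Delta x\Delta y\,I_{n_z}\otimes\tilde I_{n_y+1}\otimes\tilde I_{n_x+1})$; $D_l'=\mathrm{diag}(\Delta x\, I_{n_x(n_y+1)(n_z+1)},\ \Delta y\, I_{(n_x+1)n_y(n_z+1)},\ \Delta z\, I_{(n_x+1)(n_y+1)n_z})$; $H=\frac{\hbar^2}{2m}D D_S''(D_l')^{-1}D^T+D_V''D_U$. *)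

From HB Require Import structures.
From mathcomp Require Import all_boot all_order all_algebra.
From mathcomp Require Import mxtens complex.
Set Implicit Arguments. Unset Strict Implicit. Unset Printing Implicit Defensive.
Import Order.TTheory GRing.Theory Num.Theory.
Local Open Scope ring_scope.

Section Defs.
Variable R : rcfType.

Definition Itilde (p : nat) : 'M[R]_p :=
  diag_mx (\row_(i < p) (if (i == 0%N :> nat) || (i == p.-1 :> nat) then 2^-1 else 1)).

Definition Wmx (p : nat) : 'M[R]_(p, p.+1) :=
  \matrix_(i < p, j < p.+1) (((j : nat) == i.+1)%:R - ((j : nat) == i)%:R).

Definition bdiag3 (a b c : nat) (A : 'M[R]_a) (B : 'M[R]_b) (C : 'M[R]_c)
  : 'M[R]_(a + (b + c)) :=
  block_mx A 0 0 (block_mx B 0 0 C).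

Definition diag_invsqrt (n : nat) (A : 'M[R]_n) : 'M[R]_n :=
  diag_mx (\row_i (Num.sqrt (A i i))^-1).

Definition posdef (n : nat) (A : 'M[R]_n) : Prop :=
  A^T = A /\ forall v : 'cV[R]_n, v != 0 -> 0 < (v^T *m A *m v) 0 0.

Definition cplx_eigs (n : nat) (A : 'M[R]_n) : seq R[i] :=
  sval (closed_field_poly_normal (char_poly (map_mx (fun x : R => x%:C%C) A))).

Definition spectral_radius (n : nat) (A : 'M[R]_n) : R :=
  \big[Num.max/0]_(z <- cplx_eigs A) Normc.normc z.

End Defs.

Section Model.
Variables (R : rcfType) (hbar mass dx dy dz : R) (nx ny nz : nat).

Definition Nn := (nz.+1 * ny.+1 * nx.+1)%N.
Definition Ex := (nz.+1 * ny.+1 * nx)%N.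
Definition Ey := (nz.+1 * ny * nx.+1)%N.
Definition Ez := (nz * ny.+1 * nx.+1)%N.

Definition DV2 : 'M[R]_Nn :=
  (dx * dy * dz) *: (Itilde R nz.+1 *t Itilde R ny.+1 *t Itilde R nx.+1).

(* D_U : node (i,j,k) (0-based here) gets index k*(ny+1)*(nx+1) + j*(nx+1) + i,
   which is the ordering of the paper and of the Kronecker products. *)
Definition DU (U : 'I_nx.+1 -> 'I_ny.+1 -> 'I_nz.+1 -> R) : 'M[R]_Nn :=
  diag_mx (\row_(a < Nn)
    let kj := (mxtens_unindex a).1 in
    let i := (mxtens_unindex a).2 in
    U i (mxtens_unindex kj).2 (mxtens_unindex kj).1).

Definition Dx : 'M[R]_(Nn, Ex) :=
  - ((1%:M : 'M[R]_nz.+1) *t (1%:M : 'M[R]_ny.+1) *t (Wmx R nx)^T).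
Definition Dy : 'M[R]_(Nn, Ey) :=
  - ((1%:M : 'M[R]_nz.+1) *t (Wmx R ny)^T *t (1%:M : 'M[R]_nx.+1)).
Definition Dz : 'M[R]_(Nn, Ez) :=
  - ((Wmx R nz)^T *t (1%:M : 'M[R]_ny.+1) *t (1%:M : 'M[R]_nx.+1)).

Definition Dmx : 'M[R]_(Nn, Ex + (Ey + Ez)) := row_mx Dx (row_mx Dy Dz).

Definition DS2 : 'M[R]_(Ex + (Ey + Ez)) :=
  bdiag3 ((dy * dz) *: (Itilde R nz.+1 *t Itilde R ny.+1 *t (1%:M : 'M[R]_nx)))
         ((dx * dz) *: (Itilde R nz.+1 *t (1%:M : 'M[R]_ny) *t Itilde R nx.+1))
         ((dx * dy) *: ((1%:M : 'M[R]_nz) *t Itilde R ny.+1 *t Itilde R nx.+1)).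

Definition Dl1 : 'M[R]_(Ex + (Ey + Ez)) :=
  bdiag3 (dx%:M : 'M[R]_Ex) (dy%:M : 'M[R]_Ey) (dz%:M : 'M[R]_Ez).

Definition Hmx (U : 'I_nx.+1 -> 'I_ny.+1 -> 'I_nz.+1 -> R) : 'M[R]_Nn :=
  (hbar ^+ 2 / (2 * mass)) *: (Dmx *m DS2 *m invmx Dl1 *m Dmx^T) + DV2 *m DU U.

Definition Pmx (U : 'I_nx.+1 -> 'I_ny.+1 -> 'I_nz.+1 -> R) (dt : R) : 'M[R]_(Nn + Nn) :=
  block_mx DV2 (- (dt / (2 * hbar)) *: Hmx U)
           (- (dt / (2 * hbar)) *: Hmx U) DV2.

End Model.

From HB Require Import structures.
From mathcomp Require Import all_boot all_order all_algebra.
From mathcomp Require Import mxtens complex.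
From mathcomp Require Import spectral sesquilinear.
From mathcomp Require Import lra ring.
Import Order.TTheory GRing.Theory Num.Theory.
Local Open Scope ring_scope.
Set Implicit Arguments. Unset Strict Implicit. Unset Printing Implicit Defensive.

(* Write D_V'' = T^T T with T its diagonal square root, and H = hbar T^T M T where M is
   the matrix whose spectral radius appears in the statement. The block matrix
   [[A, B], [B, A]] is congruent to diag(A + B, A - B), so P is positive definite iff
   I - (dt/2) M and I + (dt/2) M are. For symmetric M, a unitary diagonalisation of its
   complexification gives |x^T M x| <= rho(M) x^T x, and real eigenvectors show the bound
   is sharp, so this holds iff (dt/2) rho(M) < 1. Finally rho(M) > 0 because H couples
   neighbouring nodes along the x axis, so M is nonzero. *)

Section BilinearForm.
Variables (R : rcfType) (n : nat).
Implicit Types (A B T : 'M[R]_n) (x y : 'cV[R]_n).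

Definition bform A x y : R := (x^T *m A *m y) 0 0.

Lemma bformDl A x x' y : bform A (x + x') y = bform A x y + bform A x' y.
Proof. by rewrite /bform linearD /= !mulmxDl mxE. Qed.

Lemma bformDr A x y y' : bform A x (y + y') = bform A x y + bform A x y'.
Proof. by rewrite /bform mulmxDr mxE. Qed.

Lemma bformNl A x y : bform A (- x) y = - bform A x y.
Proof. by rewrite /bform linearN /= !mulNmx mxE. Qed.

Lemma bformNr A x y : bform A x (- y) = - bform A x y.
Proof. by rewrite /bform mulmxN mxE. Qed.

Lemma bform0r A x : bform A x 0 = 0.
Proof. by rewrite /bform mulmx0 mxE. Qed.

Lemma bformD A B x y : bform (A + B) x y = bform A x y + bform B x y.
Proof. by rewrite /bform mulmxDr mulmxDl mxE. Qed.

Lemma bformZ a A x y : bform (a *: A) x y = a * bform A x y.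
Proof. by rewrite /bform -scalemxAr -scalemxAl mxE. Qed.

Lemma bformN A x y : bform (- A) x y = - bform A x y.
Proof. by rewrite -scaleN1r bformZ mulN1r. Qed.

Lemma bform_conj T A x y : bform (T^T *m A *m T) x y = bform A (T *m x) (T *m y).
Proof. by rewrite /bform trmx_mul !mulmxA. Qed.

Lemma bform_delta A i j : bform A (delta_mx i 0) (delta_mx j 0) = A i j.
Proof. by rewrite /bform trmx_delta -rowE -colE !mxE. Qed.

Lemma bform1_gt0 x : x != 0 -> 0 < bform 1%:M x x.
Proof.
move=> /matrix0Pn [i [j]]; rewrite ord1 => xi0.
rewrite /bform mulmx1 mxE (bigD1 i) //= ltr_pwDl ?sumr_ge0 // => [|k _].
  by rewrite mxE -expr2 exprn_even_gt0.
by rewrite mxE -expr2 sqr_ge0.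
Qed.

Lemma sym_bform_eq0 A : A^T = A -> (forall x, bform A x x = 0) -> A = 0.
Proof.
move=> symA hA; apply/matrixP => i j; rewrite mxE.
have := hA (delta_mx i 0 + delta_mx j 0).
have Aji : A j i = A i j by rewrite -{1}symA mxE.
by rewrite !bformDl !bformDr !hA !bform_delta Aji; lra.
Qed.

End BilinearForm.

Lemma posdefE (R : rcfType) n (A : 'M[R]_n) :
  posdef A = (A^T = A /\ forall x, x != 0 -> 0 < bform A x x).
Proof. by []. Qed.

Section PositiveDefinite.
Variables (R : rcfType) (n : nat).
Implicit Types (A B T : 'M[R]_n) (x y : 'cV[R]_n).

Lemma posdef_ge0 A x : posdef A -> 0 <= bform A x x.
Proof.
by case=> _ posA; have [->|/posA/ltW//] := eqVneq x 0; rewrite bform0r.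
Qed.

Lemma posdef_conj T A : T \in unitmx -> posdef (T^T *m A *m T) <-> posdef A.
Proof.
rewrite !posdefE => Tu; have TTu : T^T \in unitmx by rewrite unitmx_tr.
have Tx_eq0 x : (T *m x == 0) = (x == 0).
  by apply/eqP/eqP => [Tx0|->]; rewrite ?mulmx0 // -(mulKmx Tu x) Tx0 mulmx0.
split=> [[symTAT posTAT] | [symA posA]]; split.
- move: symTAT; rewrite !trmx_mul trmxK => /(congr1 (mulmx (invmx T^T))).
  by rewrite -!mulmxA !mulKmx // => /(congr1 (mulmx^~ (invmx T))); rewrite !mulmxK.
- move=> y y0; have := posTAT (invmx T *m y).
  by rewrite -Tx_eq0 mulKVmx // bform_conj mulKVmx //; apply.
- by rewrite !trmx_mul trmxK symA mulmxA.
- by move=> x x0; rewrite bform_conj posA // Tx_eq0.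
Qed.

Lemma posdef_block_sym A B : A^T = A -> B^T = B ->
  posdef (block_mx A B B A) <-> posdef (A + B) /\ posdef (A - B).
Proof.
rewrite !posdefE => symA symB.
have formE x y : bform (block_mx A B B A) (col_mx x y) (col_mx x y) =
    bform A x x + bform B x y + bform B y x + bform A y y.
  by rewrite /bform tr_col_mx mul_row_block mul_row_col !mulmxDl !mxE; ring.
have polarE x y : 2 * bform (block_mx A B B A) (col_mx x y) (col_mx x y) =
    bform (A + B) (x + y) (x + y) + bform (A - B) (x - y) (x - y).
  by rewrite formE !bformD bformN !bformDl !bformDr !bformNl !bformNr; ring.
split=> [[_ posP] | [posAB posBA]]; first split.
- split=> [|x x0]; first by rewrite linearD /= symA symB.
  have := posP (col_mx x x); rewrite col_mx_eq0 (negPf x0) formE bformD => /(_ isT).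
  lra.
- split=> [|x x0]; first by rewrite linearB /= symA symB.
  have := posP (col_mx x (- x)); rewrite col_mx_eq0 (negPf x0) formE bformD bformN.
  rewrite bformNl bformNr bformNl bformNr opprK => /(_ isT); lra.
- split=> [|v v0]; first by rewrite tr_block_mx symA symB.
  rewrite -(vsubmxK v); set x := usubmx v; set y := dsubmx v.
  have := polarE x y; have := posdef_ge0 (x + y) posAB.
  have := posdef_ge0 (x - y) posBA.
  have [sum0|sum_neq0] := eqVneq (x + y) 0; last by have := posAB.2 _ sum_neq0; lra.
  have diff_neq0 : x - y != 0.
    apply: contra v0 => /eqP diff0; rewrite -(vsubmxK v) -/x -/y col_mx_eq0.
    have yx : y = x by apply/esym/eqP; rewrite -subr_eq0 diff0.
    move: sum0; rewrite yx -mulr2n -scaler_nat => /eqP.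
    by rewrite scaler_eq0 pnatr_eq0 /= => ->.
  by have := posBA.2 _ diff_neq0; lra.
Qed.

End PositiveDefinite.

Section ComplexSpectrum.
Variables (R : rcfType) (n : nat).
Implicit Types (A : 'M[R]_n).

Lemma mem_cplx_eigs A z :
  (z \in cplx_eigs A) = eigenvalue (map_mx (real_complex R) A) z.
Proof.
rewrite eigenvalue_root_char /cplx_eigs; case: closed_field_poly_normal => r /= ->.
by rewrite (monicP (char_poly_monic _)) scale1r root_prod_XsubC.
Qed.

Lemma real_mem_cplx_eigs A (l : R) : (l%:C%C \in cplx_eigs A) = eigenvalue A l.
Proof.
by rewrite mem_cplx_eigs !eigenvalue_root_char -map_char_poly fmorph_root.
Qed.

Lemma normc_real (l : R) : Normc.normc l%:C%C = `|l|.
Proof. by rewrite /= expr0n addr0 sqrtr_sqr. Qed.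

Lemma spectral_radius_ge0 A : 0 <= spectral_radius A.
Proof. exact: bigmax_ge_id. Qed.

Lemma normc_le_spectral_radius A z :
  z \in cplx_eigs A -> Normc.normc z <= spectral_radius A.
Proof. by move=> zA; apply: le_bigmax_seq. Qed.

Lemma spectral_radius_lt A c : 0 < c ->
  {in cplx_eigs A, forall z, Normc.normc z < c} -> spectral_radius A < c.
Proof.
move=> c0 ltAc; rewrite /spectral_radius big_seq_cond.
by apply: bigmax_lt => // z /andP[/ltAc].
Qed.

End ComplexSpectrum.

Section SymmetricSpectrum.
Variables (R : rcfType) (n : nat) (M : 'M[R]_n).
Hypothesis symM : M^T = M.
Local Open Scope sesquilinear_scope.
Local Notation toC := (real_complex R).
Local Notation Mc := (map_mx toC M).
Local Notation rho := (spectral_radius M).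

Let Mc_hermitian : Mc \is hermsymmx.
Proof.
apply/is_hermitianmxP; rewrite expr0 scale1r; apply/matrixP => i j.
by rewrite !mxE conj_Creal ?complex_real // -{1}symM mxE.
Qed.

Let P := spectralmx Mc.
Let d := spectral_diag Mc.
Let lam i := complex.Re (d 0 i).

Let Mc_spectral : Mc = P^t* *m diag_mx d *m P.
Proof.
have := orthomx_spectralP (A := Mc).
rewrite hermitian_normalmx // => /(_ isT).
by rewrite invmx_unitary // spectral_unitarymx.
Qed.

Let PPt : P *m P^t* = 1%:M.
Proof. exact/unitarymxP/spectral_unitarymx. Qed.

Let PtP : P^t* *m P = 1%:M.
Proof. exact/mulmx1C/PPt. Qed.

Let d_real i : d 0 i = (lam i)%:C%C.
Proof.
rewrite RRe_real //.
by have /mxOverP := hermitian_spectral_diag_real Mc_hermitian; apply.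
Qed.

Let lam_eigs i : (lam i)%:C%C \in cplx_eigs M.
Proof.
rewrite mem_cplx_eigs -d_real; apply/eigenvalueP; exists ('e_i *m P).
  rewrite Mc_spectral !mulmxA -(mulmxA _ P) PPt mulmx1.
  by rewrite -(rowE i (diag_mx d)) row_diag_mx -scalemxAl.
apply/eqP => /(congr1 (fun B => B *m P^t*)); rewrite -mulmxA PPt mulmx1 mul0mx.
by move=> /matrixP/(_ 0 i); rewrite !mxE !eqxx /= => /eqP; rewrite oner_eq0.
Qed.

Lemma cplx_eigs_sym z : z \in cplx_eigs M -> exists l : R, z = l%:C%C.
Proof.
rewrite mem_cplx_eigs => /eigenvalueP [v vMc vn0].
pose w := v *m P^t*.
have wD : w *m diag_mx d = z *: w.
  move/(congr1 (fun B => B *m P^t*)): vMc; rewrite Mc_spectral !mulmxA -scalemxAl.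
  by rewrite -(mulmxA _ P) PPt mulmx1.
have /matrix0Pn [i0 [j wj0]] : w != 0.
  apply: contra vn0 => /eqP w0; apply/eqP.
  by rewrite -(mulmx1 v) -PtP mulmxA -/w w0 mul0mx.
clearbody w; exists (lam j); rewrite -d_real; move/matrixP: wD => /(_ i0 j).
by rewrite mul_mx_diag !mxE mulrC => /(mulIf wj0) ->.
Qed.

Let lam_le_spectral_radius i : `|lam i| <= rho.
Proof. by rewrite -normc_real; apply: normc_le_spectral_radius. Qed.

Let bformE (a b : R) x :
  (bform (a *: 1%:M + b *: M) x x)%:C%C =
  \sum_j (a + b * lam j)%:C%C * `|(P *m map_mx toC x) j 0| ^+ 2.
Proof.
set u := P *m map_mx toC x.
have xcT : (map_mx toC x)^T = (map_mx toC x)^t*.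
  by apply/matrixP => i j; rewrite !mxE conj_Creal ?complex_real.
have uT : (map_mx toC x)^t* *m P^t* = u^t* by rewrite /u trmx_mul map_mxM.
have diagE : a%:C%C *: 1%:M + b%:C%C *: diag_mx d =
    diag_mx (\row_j (a + b * lam j)%:C%C).
  apply/matrixP => i j; rewrite !mxE d_real.
  by case: (i == j) => /=; rewrite ?mulr1n ?mulr1 ?mulr0n ?mulr0 ?addr0 // rmorphD rmorphM.
have -> : (bform (a *: 1%:M + b *: M) x x)%:C%C =
    (map_mx toC (x^T *m (a *: 1%:M + b *: M) *m x)) 0 0 by rewrite [RHS]mxE.
rewrite !map_mxM map_mxD !map_mxZ map_mx1 -map_trmx xcT Mc_spectral.
have -> : a%:C%C *: 1%:M + b%:C%C *: (P^t* *m diag_mx d *m P) =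
    P^t* *m diag_mx (\row_j (a + b * lam j)%:C%C) *m P.
  by rewrite -diagE mulmxDr mulmxDl -!scalemxAr -!scalemxAl mulmx1 PtP ?mulmxA.
rewrite !mulmxA uT -mulmxA -/u mul_mx_diag mxE; apply: eq_bigr => j _.
by rewrite !mxE sqr_normc; ring.
Qed.

Lemma bform_sym_le x : `|bform M x x| <= rho * bform 1%:M x x.
Proof.
have shifted_ge0 (s : R) : `|s| <= 1 -> 0 <= bform (rho *: 1%:M + s *: M) x x.
  move=> s1; rewrite -ler0c bformE sumr_ge0 // => j _.
  rewrite mulr_ge0 ?exprn_ge0 // ler0c.
  have := ler_norm (- (s * lam j)); rewrite normrN normrM.
  have := lam_le_spectral_radius j; have := normr_ge0 (lam j); nra.
have := shifted_ge0 1; have := shifted_ge0 (-1).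
rewrite normrN normr1 !bformD !bformZ ler_norml; lra.
Qed.

End SymmetricSpectrum.

Section ShiftedIdentity.
Variables (R : rcfType) (n : nat).
Implicit Types (M T : 'M[R]_n).

Lemma posdef_1_addZ M (s : R) : M^T = M -> `|s| * spectral_radius M < 1 ->
  posdef (1%:M + s *: M).
Proof.
move=> symM lt1; rewrite posdefE; split=> [|x x0].
  by rewrite linearD linearZ /= trmx1 symM.
have := bform1_gt0 x0; have := bform_sym_le symM x; rewrite bformD bformZ.
have := ler_norm (- (s * bform M x x)); rewrite normrN normrM.
have := normr_ge0 s; have := normr_ge0 (bform M x x); nra.
Qed.

Lemma posdef_1_addZ_eigenvalue M (s l : R) :
  posdef (1%:M + s *: M) -> eigenvalue M l -> 0 < 1 + s * l.
Proof.
case=> _ posM /eigenvalueP [v vM v0].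
have := posM v^T; rewrite trmx_eq0 => /(_ v0).
rewrite trmxK mulmxDr mulmx1 -scalemxAr vM scalerA -[X in X + _]scale1r -scalerDl.
rewrite -scalemxAl mxE pmulr_lgt0 //.
by move: v0; rewrite -trmx_eq0 => /bform1_gt0; rewrite /bform trmxK mulmx1.
Qed.

Lemma posdef_1_subZ_addZ M (k : R) : M^T = M -> 0 < k ->
  posdef (1%:M - k *: M) /\ posdef (1%:M + k *: M) <-> k * spectral_radius M < 1.
Proof.
move=> symM k0; split=> [[posB posD] | lt1]; last first.
  by rewrite -scaleNr; split; apply: posdef_1_addZ => //; rewrite ?normrN gtr0_norm.
rewrite -ltr_pdivlMl // mulr1; apply: spectral_radius_lt; first by rewrite invr_gt0.
move=> z /[dup] /(cplx_eigs_sym symM) [l ->].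
rewrite real_mem_cplx_eigs normc_real => eig_l.
rewrite -scaleNr in posB.
have := posdef_1_addZ_eigenvalue posD eig_l; have := posdef_1_addZ_eigenvalue posB eig_l.
move=> ? ?; rewrite -[k^-1]mulr1 ltr_pdivlMl // -{1}(gtr0_norm k0) -normrM ltr_norml.
by apply/andP; split; lra.
Qed.

Lemma spectral_radius_gt0 M : M^T = M -> M != 0 -> 0 < spectral_radius M.
Proof.
move=> symM; apply: contra_neqT; rewrite lt_def spectral_radius_ge0 andbT negbK.
move=> /eqP rho0; apply/sym_bform_eq0 => // x; apply/eqP; rewrite -normr_le0.
by rewrite -(mul0r (bform 1%:M x x)) -rho0 bform_sym_le.
Qed.

Lemma posdef_block_conj T M (k : R) : T \in unitmx -> M^T = M -> 0 < k ->
  posdef (block_mx (T^T *m T) (- k *: (T^T *m M *m T))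
                   (- k *: (T^T *m M *m T)) (T^T *m T))
  <-> k * spectral_radius M < 1.
Proof.
move=> Tu symM k0.
have conjE (s : R) : T^T *m (1%:M + s *: M) *m T = T^T *m T + s *: (T^T *m M *m T).
  by rewrite mulmxDr mulmx1 mulmxDl -scalemxAr -scalemxAl.
rewrite posdef_block_sym; first last.
- by rewrite linearZ /= !trmx_mul trmxK symM mulmxA.
- by rewrite trmx_mul trmxK.
have -> : T^T *m T - (- k) *: (T^T *m M *m T) = T^T *m T + k *: (T^T *m M *m T).
  by rewrite scaleNr opprK.
by rewrite -!conjE !posdef_conj // scaleNr; apply: posdef_1_subZ_addZ.
Qed.

End ShiftedIdentity.

Lemma is_diag_mxZ (R : pzRingType) n (a : R) (A : 'M[R]_n) :
  is_diag_mx A -> is_diag_mx (a *: A).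
Proof. by move=> /is_diag_mxP A0; apply/is_diag_mxP => i j ij; rewrite mxE A0 ?mulr0. Qed.

Lemma tensmx_is_diag (R : pzRingType) m p (A : 'M[R]_m) (B : 'M[R]_p) :
  is_diag_mx A -> is_diag_mx B -> is_diag_mx (A *t B).
Proof.
move=> /is_diag_mxP A0 /is_diag_mxP B0; apply/is_diag_mxP => i j.
case: (mxtens_indexP i) => i1 i2; case: (mxtens_indexP j) => j1 j2 ij.
rewrite tensmxE; have [e1|n1] := eqVneq i1 j1; last by rewrite A0 ?mul0r.
by rewrite B0 ?mulr0 //; apply: contra ij => /eqP e2; rewrite e1 (val_inj e2).
Qed.

Lemma tensmx_diag_gt0 (R : numDomainType) m p (A : 'M[R]_m) (B : 'M[R]_p) :
  (forall i, 0 < A i i) -> (forall i, 0 < B i i) -> forall i, 0 < (A *t B) i i.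
Proof. by move=> A0 B0 i; case: (mxtens_indexP i) => i1 i2; rewrite tensmxE mulr_gt0. Qed.

Lemma is_diag_mx_diagE (R : pzRingType) n (A : 'M[R]_n) :
  is_diag_mx A -> A = diag_mx (\row_i A i i).
Proof.
move=> /is_diag_mxP A0; apply/matrixP => i j; rewrite !mxE.
by have [->|ij] := eqVneq i j; rewrite ?mulr1n // mulr0n A0.
Qed.

Lemma is_diag_mx_sym (R : pzRingType) n (A : 'M[R]_n) : is_diag_mx A -> A^T = A.
Proof. by move/is_diag_mx_diagE ->; rewrite tr_diag_mx. Qed.

Definition diag_sqrt (R : rcfType) n (A : 'M[R]_n) : 'M[R]_n :=
  diag_mx (\row_i Num.sqrt (A i i)).

Section DiagonalSquareRoot.
Variables (R : rcfType) (n : nat) (A : 'M[R]_n).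
Hypotheses (Adiag : is_diag_mx A) (Apos : forall i, 0 < A i i).

Lemma diag_sqrt_invsqrt : diag_sqrt A *m diag_invsqrt A = 1%:M.
Proof.
rewrite mulmx_diag -diag_const_mx; congr diag_mx; apply/rowP => i.
by rewrite !mxE divff // gt_eqF // sqrtr_gt0.
Qed.

Lemma diag_invsqrt_sqrt : diag_invsqrt A *m diag_sqrt A = 1%:M.
Proof. exact/mulmx1C/diag_sqrt_invsqrt. Qed.

Lemma diag_sqrt_unit : diag_sqrt A \in unitmx.
Proof. by case: (mulmx1_unit diag_sqrt_invsqrt). Qed.

Lemma diag_sqrtTK : (diag_sqrt A)^T *m diag_sqrt A = A.
Proof.
rewrite tr_diag_mx mulmx_diag [RHS]is_diag_mx_diagE //; congr diag_mx.
by apply/rowP => i; rewrite !mxE -expr2 sqr_sqrtr // ltW.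
Qed.

Lemma diag_invsqrt_conjK B :
  (diag_sqrt A)^T *m (diag_invsqrt A *m B *m diag_invsqrt A) *m diag_sqrt A = B.
Proof.
by rewrite tr_diag_mx !mulmxA diag_sqrt_invsqrt mul1mx -mulmxA diag_invsqrt_sqrt mulmx1.
Qed.

End DiagonalSquareRoot.

Lemma tensmx_conj (R : comPzRingType) m n p q (A : 'M[R]_(m, n)) (B : 'M[R]_(p, q))
    (C : 'M[R]_n) (D : 'M[R]_q) :
  (A *t B) *m (C *t D) *m (A *t B)^T = (A *m C *m A^T) *t (B *m D *m B^T).
Proof. by rewrite trmx_tens !tensmx_mul. Qed.

Section Discretisation.
Variables (R : rcfType) (hbar mass dx dy dz : R) (nx ny nz : nat).
Variable U : 'I_nx.+1 -> 'I_ny.+1 -> 'I_nz.+1 -> R.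
Hypotheses (dx0 : 0 < dx) (dy0 : 0 < dy) (dz0 : 0 < dz).

Local Notation lap p := ((Wmx R p)^T *m Wmx R p).

Lemma Itilde_diag p : is_diag_mx (Itilde R p).
Proof. exact: diag_mx_is_diag. Qed.

Lemma Itilde_gt0 p i : 0 < (Itilde R p) i i.
Proof. by rewrite !mxE eqxx mulr1n; case: ifP; rewrite ?invr_gt0. Qed.

Lemma Itilde_sym p : (Itilde R p)^T = Itilde R p.
Proof. exact/is_diag_mx_sym/Itilde_diag. Qed.

Lemma lap_sym p : (lap p)^T = lap p.
Proof. by rewrite trmx_mul trmxK. Qed.

Lemma lap01 p : (0 < p)%N -> lap p 0 (inord 1) = -1.
Proof.
case: p => // p _; rewrite mxE big_ord_recl big1 => [|k _]; rewrite !mxE inordK //=.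
  by rewrite add0r subr0 mulr1 addr0.
by rewrite subrr mul0r.
Qed.

Lemma DV2_diag : is_diag_mx (DV2 dx dy dz nx ny nz).
Proof. by rewrite is_diag_mxZ // !tensmx_is_diag // Itilde_diag. Qed.

Lemma DV2_gt0 i : 0 < DV2 dx dy dz nx ny nz i i.
Proof.
rewrite mxE !mulr_gt0 //; apply: tensmx_diag_gt0; first apply: tensmx_diag_gt0.
all: exact: Itilde_gt0.
Qed.

Lemma stiffness_kron_sum :
  Dmx R nx ny nz *m DS2 dx dy dz nx ny nz *m invmx (Dl1 dx dy dz nx ny nz)
    *m (Dmx R nx ny nz)^T =
  (dy * dz / dx) *: (Itilde R nz.+1 *t Itilde R ny.+1 *t lap nx) +
  ((dx * dz / dy) *: (Itilde R nz.+1 *t lap ny *t Itilde R nx.+1) +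
   (dx * dy / dz) *: (lap nz *t Itilde R ny.+1 *t Itilde R nx.+1)).
Proof.
have scalar_unit m (a : R) : 0 < a -> (a%:M : 'M[R]_m) \in unitmx.
  by move=> a0; rewrite -scalemx1 unitmxZ ?unitmx1 // unitfE gt_eqF.
rewrite /Dl1 /bdiag3 !invmx_block_diag ?block_diag_mx_unit ?scalar_unit //.
rewrite !invmx_scalar /DS2 /bdiag3 -[Dmx _ _ _ _ *m _ *m _]mulmxA !mulmx_block.
rewrite !(mulmx0, mul0mx, addr0, add0r).
rewrite /Dmx !tr_row_mx !mul_row_block !(mulmx0, mul0mx, addr0, add0r) !mul_row_col.
rewrite !mul_mx_scalar !scalerA /Dx /Dy /Dz !linearN /= !mulNmx !opprK.
rewrite -!scalemxAr -!scalemxAl !tensmx_conj !trmx1 !trmxK !mul1mx !mulmx1.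
by rewrite !(mulrC _^-1).
Qed.

Lemma Hmx_sym : (Hmx hbar mass dx dy dz U)^T = Hmx hbar mass dx dy dz U.
Proof.
rewrite /Hmx stiffness_kron_sum linearD /= !linearZ /= !linearD /= !linearZ /=.
rewrite !trmx_tens !Itilde_sym !lap_sym; congr (_ + _).
by rewrite trmx_mul [DV2 _ _ _ _ _ _]is_diag_mx_diagE ?DV2_diag // !tr_diag_mx diag_mxC.
Qed.

Lemma Hmx_neq0 : 0 < hbar -> 0 < mass -> (0 < nx)%N -> Hmx hbar mass dx dy dz U != 0.
Proof.
move=> hbar0 mass0 nx0.
pose i0 : 'I_(Nn nx ny nz) := mxtens_index (mxtens_index (0, 0), 0).
pose i1 : 'I_(Nn nx ny nz) := mxtens_index (mxtens_index (0, 0), inord 1).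
have ord01 p : (0 < p)%N -> (0 : 'I_p.+1) != inord 1 by move=> p0; rewrite -val_eqE /= inordK.
have i01 : i0 != i1.
  by rewrite (inj_eq (can_inj (@mxtens_indexK _ _))) xpair_eqE eqxx /= ord01.
have DVU_diag : is_diag_mx (DV2 dx dy dz nx ny nz *m DU U).
  by rewrite [DV2 _ _ _ _ _ _]is_diag_mx_diagE ?DV2_diag // mulmx_diag diag_mx_is_diag.
have entryD m (A B : 'M[R]_m) i j : (A + B) i j = A i j + B i j by rewrite mxE.
have entryZ m a (A : 'M[R]_m) i j : (a *: A) i j = a * A i j by rewrite mxE.
(* Nodes i0 and i1 are neighbours along x: only the x-stiffness term couples them. *)
apply/eqP => /matrixP/(_ i0 i1); rewrite [X in _ = X -> _]mxE /Hmx stiffness_kron_sum.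
rewrite !(entryD, entryZ).
rewrite (is_diag_mxP DVU_diag) // /i0 /i1 !tensmxE lap01 //.
rewrite !(is_diag_mxP (Itilde_diag _) 0 (inord 1)) ?ord01 // !mulr0 !addr0 mulrN1.
apply/eqP; rewrite !mulrN oppr_eq0 gt_eqF //.
by rewrite !mulr_gt0 ?invr_gt0 ?exprn_gt0 ?mulr_gt0 ?Itilde_gt0.
Qed.

End Discretisation.

Unset Implicit Arguments.

Theorem lemma1 (R : rcfType) (hbar mass dx dy dz : R) (nx ny nz : nat)
  (U : 'I_nx.+1 -> 'I_ny.+1 -> 'I_nz.+1 -> R) (dt : R) :
  0 < hbar -> 0 < mass -> 0 < dx -> 0 < dy -> 0 < dz ->
  (0 < nx)%N -> (0 < ny)%N -> (0 < nz)%N -> 0 < dt ->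
  posdef (Pmx hbar mass dx dy dz U dt) <->
  dt < 2 / spectral_radius
             (hbar^-1 *: (diag_invsqrt (DV2 dx dy dz nx ny nz)
                          *m Hmx hbar mass dx dy dz U
                          *m diag_invsqrt (DV2 dx dy dz nx ny nz))).
Proof.
move=> hbar0 mass0 dx0 dy0 dz0 nx0 _ _ dt0.
set A := DV2 dx dy dz nx ny nz; set H := Hmx hbar mass dx dy dz U.
set M := hbar^-1 *: _; set T := diag_sqrt A.
have Adiag : is_diag_mx A := DV2_diag dx dy dz nx ny nz.
have Apos : forall i, 0 < A i i := DV2_gt0 dx0 dy0 dz0.
have HE : H = hbar *: (T^T *m M *m T).
  by rewrite -scalemxAr -scalemxAl diag_invsqrt_conjK // scalerA divff ?gt_eqF ?scale1r.
have symM : M^T = M.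
  by rewrite /M linearZ /= !trmx_mul /diag_invsqrt tr_diag_mx Hmx_sym // mulmxA.
have rho_gt0 : 0 < spectral_radius M.
  apply: spectral_radius_gt0 => //; apply: contra (Hmx_neq0 U dx0 dy0 dz0 hbar0 mass0 nx0).
  by move=> /eqP M0; rewrite -/H HE M0 mulmx0 mul0mx scaler0.
have PE : Pmx hbar mass dx dy dz U dt =
    block_mx (T^T *m T) (- (dt / 2) *: (T^T *m M *m T))
             (- (dt / 2) *: (T^T *m M *m T)) (T^T *m T).
  rewrite /Pmx -/A -/H diag_sqrtTK // HE scalerA mulNr invfM mulrA divfK ?gt_eqF //.
rewrite PE posdef_block_conj ?diag_sqrt_unit ?divr_gt0 //.
by rewrite ltr_pdivlMr // mulrAC ltr_pdivrMr // mul1r.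
Qed.
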